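(* Let $S$ be a pomonoid and $f:X\to B$ an $S$-poset map. If $\langle 1_X,f\rangle:X\to X\times B$ is a section in $\mathbf{Pos}\text{-}S/B$ (i.e. there is an $S$-poset map $r:X\times B\to X$ with $r\langle 1_X,f\rangle=1_X$ and $f r=\pi_B$), then for every $x\in X$ and $b\in B$ with $f(x)\le b$, the set $\{x'\in f^{-1}(b)\mid x\le x'\}$ has a minimum element.
   Context: A pomonoid is a monoid with a compatible partial order; $S$-posets are posets with a monotone right action of $S$, and $\mathbf{Pos}\text{-}S$ has action-preserving monotone maps as morphisms. $\mathbf{Pos}\text{-}S/B$ is the slice category over the $S$-poset $B$: objects are $S$-poset maps into $B$, morphisms are commuting triangles. $X\times B$ is the product $S$-poset with componentwise order and action, regarded over $B$ via the second projection $\pi_B$. *)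

Record pomonoid := Pomonoid {
  pm_car :> Type;
  pm_mul : pm_car -> pm_car -> pm_car;
  pm_one : pm_car;
  pm_le : pm_car -> pm_car -> Prop;
  pm_mulA : forall s t u, pm_mul s (pm_mul t u) = pm_mul (pm_mul s t) u;
  pm_mul1s : forall s, pm_mul pm_one s = s;
  pm_muls1 : forall s, pm_mul s pm_one = s;
  pm_le_refl : forall s, pm_le s s;
  pm_le_trans : forall s t u, pm_le s t -> pm_le t u -> pm_le s u;
  pm_le_antisym : forall s t, pm_le s t -> pm_le t s -> s = t;
  pm_mul_mono : forall s s' t t', pm_le s t -> pm_le s' t' ->
      pm_le (pm_mul s s') (pm_mul t t')
}.

Record Sposet (S : pomonoid) := Sposet_mk {
  sp_car :> Type;
  sp_le : sp_car -> sp_car -> Prop;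
  sp_act : sp_car -> pm_car S -> sp_car;
  sp_le_refl : forall x, sp_le x x;
  sp_le_trans : forall x y z, sp_le x y -> sp_le y z -> sp_le x z;
  sp_le_antisym : forall x y, sp_le x y -> sp_le y x -> x = y;
  sp_act1 : forall x, sp_act x (pm_one S) = x;
  sp_actM : forall x s t, sp_act (sp_act x s) t = sp_act x (pm_mul S s t);
  sp_act_mono : forall x y s t, sp_le x y -> pm_le S s t ->
      sp_le (sp_act x s) (sp_act y t)
}.

Arguments sp_le {S} _ _ _.
Arguments sp_act {S} _ _ _.

Definition is_Sposet_map {S : pomonoid} (X Y : Sposet S) (g : X -> Y) : Prop :=
  (forall x y, sp_le X x y -> sp_le Y (g x) (g y)) /\
  (forall x s, g (sp_act X x s) = sp_act Y (g x) s).

Section Prod.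
Variables (S : pomonoid) (X B : Sposet S).
Definition prod_le (p q : X * B) : Prop :=
  sp_le X (fst p) (fst q) /\ sp_le B (snd p) (snd q).
Definition prod_act (p : X * B) (s : pm_car S) : X * B :=
  (sp_act X (fst p) s, sp_act B (snd p) s).
Lemma prod_le_refl p : prod_le p p.
Proof. split; apply sp_le_refl. Qed.
Lemma prod_le_trans p q r : prod_le p q -> prod_le q r -> prod_le p r.
Proof. intros [? ?] [? ?]; split; eapply sp_le_trans; eauto. Qed.
Lemma prod_le_antisym p q : prod_le p q -> prod_le q p -> p = q.
Proof. destruct p, q; intros [? ?] [? ?]; simpl in *;
  f_equal; apply sp_le_antisym; auto. Qed.
Lemma prod_act1 p : prod_act p (pm_one S) = p.
Proof. destruct p; unfold prod_act; simpl; rewrite !sp_act1; reflexivity. Qed.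
Lemma prod_actM p s t : prod_act (prod_act p s) t = prod_act p (pm_mul S s t).
Proof. destruct p; unfold prod_act; simpl; rewrite !sp_actM; reflexivity. Qed.
Lemma prod_act_mono p q s t : prod_le p q -> pm_le S s t ->
  prod_le (prod_act p s) (prod_act q t).
Proof. intros [? ?] ?; split; apply sp_act_mono; auto. Qed.
Definition prodSposet : Sposet S :=
  Sposet_mk S (X * B) prod_le prod_act prod_le_refl prod_le_trans
    prod_le_antisym prod_act1 prod_actM prod_act_mono.
End Prod.


(* For a retraction r of <1_X, f> over B, the element r (x, b) is the least
   element of the fibre over b above x: it lies in that fibre since
   f r = pi_B, and for x' in the fibre with x <= x' monotonicity of r gives
   r (x, b) <= r (x', f x') = x'. *)

Section RetractionFibreMinimum.

Variables (S : pomonoid) (X B : Sposet S) (f : X -> B) (r : X * B -> X).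

Hypothesis r_mono : forall p q : X * B,
  prod_le S X B p q -> sp_le X (r p) (r q).
Hypothesis r_graph : forall x : X, r (x, f x) = x.
Hypothesis f_r : forall p : X * B, f (r p) = snd p.

Lemma retraction_le (x x' : X) (b b' : B) :
  sp_le X x x' -> sp_le B b b' -> sp_le X (r (x, b)) (r (x', b')).
Proof. intros Hx Hb; apply r_mono; split; assumption. Qed.

Lemma retraction_in_fibre (x : X) (b : B) : f (r (x, b)) = b.
Proof. exact (f_r (x, b)). Qed.

Lemma le_retraction (x : X) (b : B) : sp_le B (f x) b -> sp_le X x (r (x, b)).
Proof.
  intros Hxb; pose proof (retraction_le x x (f x) b (sp_le_refl S X x) Hxb) as H.
  rewrite r_graph in H; exact H.
Qed.

Lemma retraction_le_fibre (x : X) (b : B) (x' : X) :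
  f x' = b -> sp_le X x x' -> sp_le X (r (x, b)) x'.
Proof.
  intros <- Hxx'.
  pose proof (retraction_le x x' (f x') (f x') Hxx' (sp_le_refl S B (f x'))) as H.
  rewrite r_graph in H; exact H.
Qed.

End RetractionFibreMinimum.

Theorem mainTheorem5 (S : pomonoid) (X B : Sposet S) (f : X -> B)
  (Hf : is_Sposet_map X B f)
  (Hsec : exists r : prodSposet S X B -> X,
      is_Sposet_map (prodSposet S X B) X r /\
      (forall x : X, r (x, f x) = x) /\
      (forall p : prodSposet S X B, f (r p) = snd p)) :
  forall (x : X) (b : B), sp_le B (f x) b ->
    exists m : X, (f m = b /\ sp_le X x m) /\
      (forall x' : X, f x' = b -> sp_le X x x' -> sp_le X m x').
Proof.
  destruct Hsec as [r [[r_mono _] [r_graph f_r]]].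
  intros x b Hxb; exists (r (x, b)); split; [split|].
  - exact (retraction_in_fibre S X B f r f_r x b).
  - exact (le_retraction S X B f r r_mono r_graph x b Hxb).
  - exact (retraction_le_fibre S X B f r r_mono r_graph x b).
Qed.
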